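(* Let $P_2$ have vertices $u,v$ and $P_3$ have vertices $1,2,3$ (with $2$ the middle vertex). Then the Cartesian product $P_2\square P_3$ has pretty good state transfer both between $(u,1)$ and $(u,3)$ and between $(u,1)$ and $(v,1)$, although $(u,3)\neq(v,1)$.
   Context: $P_m$ denotes the path on $m$ vertices. The transition matrix of a graph with adjacency matrix $A$ is $H(t)=\exp(-itA)$. The Cartesian product $G_1\square G_2$ has vertex set $V(G_1)\times V(G_2)$, with $(u_1,u_2)\sim(v_1,v_2)$ iff either $u_1\sim v_1$ and $u_2=v_2$, or $u_1=v_1$ and $u_2\sim v_2$. A graph has pretty good state transfer between vertices $x$ and $y$ if for every $\epsilon>0$ there is $t\in\mathbb R$ with $\big||e_x^TH(t)e_y|-1\big|<\epsilon$. *)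

From Stdlib Require Import Reals Arith List.
Open Scope R_scope.

(* A finite graph: a type of vertices, the list of its vertices (without
   repetition), decidable equality, and a boolean adjacency relation. *)
Record graph := Graph {
  vtx : Type;
  verts : list vtx;
  vdec : forall x y : vtx, {x = y} + {x <> y};
  adj : vtx -> vtx -> bool
}.

Definition path_graph (m : nat) : graph :=
  Graph nat (seq 1 m) Nat.eq_dec
        (fun i j => orb (Nat.eqb (S i) j) (Nat.eqb (S j) i)).

Definition pair_dec (G1 G2 : graph) :
  forall x y : vtx G1 * vtx G2, {x = y} + {x <> y}.
Proof.
  intros [a b] [c d].
  destruct (vdec G1 a c) as [Hac|Hac]; destruct (vdec G2 b d) as [Hbd|Hbd];
    [left; subst; reflexivity | right | right | right];
    intro H; inversion H; contradiction.
Defined.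

Definition dec_to_bool {A : Type} {x y : A} (d : {x = y} + {x <> y}) : bool :=
  if d then true else false.

Definition cart (G1 G2 : graph) : graph :=
  Graph (vtx G1 * vtx G2) (list_prod (verts G1) (verts G2)) (pair_dec G1 G2)
        (fun p q =>
           orb (andb (adj G1 (fst p) (fst q)) (dec_to_bool (vdec G2 (snd p) (snd q))))
               (andb (dec_to_bool (vdec G1 (fst p) (fst q))) (adj G2 (snd p) (snd q)))).

Definition adjR (G : graph) (x y : vtx G) : R := if adj G x y then 1 else 0.

Fixpoint apow (G : graph) (k : nat) (x y : vtx G) : R :=
  match k with
  | O => if vdec G x y then 1 else 0
  | S k' => fold_right Rplus 0 (map (fun z => adjR G x z * apow G k' z y) (verts G))
  end.

(* Real and imaginary parts of (-i)^k. *)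
Definition re_negi_pow (k : nat) : R :=
  match Nat.modulo k 4 with 0%nat => 1 | 2%nat => -1 | _ => 0 end.
Definition im_negi_pow (k : nat) : R :=
  match Nat.modulo k 4 with 1%nat => -1 | 3%nat => 1 | _ => 0 end.

(* H(t) = exp(-itA) = sum_k (-it)^k A^k / k!.  [H_entry G t x y a b] says that
   the (x,y) entry of H(t), i.e. e_x^T H(t) e_y, equals a + i b: the real and
   imaginary parts of the exponential series converge to a and b. *)
Definition H_entry (G : graph) (t : R) (x y : vtx G) (a b : R) : Prop :=
  infinite_sum (fun k => re_negi_pow k * t ^ k / INR (fact k) * apow G k x y) a /\
  infinite_sum (fun k => im_negi_pow k * t ^ k / INR (fact k) * apow G k x y) b.

Definition PGST (G : graph) (x y : vtx G) : Prop :=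
  forall eps : R, eps > 0 ->
    exists t a b : R, H_entry G t x y a b /\ Rabs (sqrt (a ^ 2 + b ^ 2) - 1) < eps.

From Stdlib Require Import Reals Arith List Lra Lia Nsatz.
Import ListNotations.
Open Scope R_scope.

(* The adjacency matrix of P2 □ P3 has the orthogonal eigenvectors (1, μ) ⊗ (1, ν, ν² - 1),
   μ ∈ {1, -1}, ν ∈ {√2, 0, -√2}, with eigenvalues μ + ν.  Expanding exp(-itA) in this basis
   gives H(t)_{(u,1),(u,3)} = cos t (cos √2t - 1) / 2 and
   H(t)_{(u,1),(v,1)} = -i sin t (cos √2t + 1) / 2.  Both moduli tend to 1 along times t at
   which |cos t| = 1 (resp. |sin t| = 1) and √2t is close to an odd (resp. even) multiple of
   π; such times come from the Pell equations x² + 1 = 2y² (t = yπ, √2y ≈ x, x and y odd) and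
   x² = 8m² + 1 (t = xπ/2, √2x/2 ≈ 2m). *)

Definition lsum {A : Type} (l : list A) (f : A -> R) : R :=
  fold_right Rplus 0 (map f l).

Lemma lsum_ext_in {A : Type} (l : list A) (f g : A -> R) :
  (forall a, In a l -> f a = g a) -> lsum l f = lsum l g.
Proof.
  unfold lsum; induction l as [|a l IH]; intros Hfg; simpl; [reflexivity|].
  rewrite (Hfg a (or_introl eq_refl)), IH; [reflexivity|].
  intros b Hb; apply Hfg; right; exact Hb.
Qed.

Lemma lsum_mul_l {A : Type} (l : list A) (c : R) (f : A -> R) :
  c * lsum l f = lsum l (fun a => c * f a).
Proof. unfold lsum; induction l as [|a l IH]; simpl; [ring|]. rewrite <- IH; ring. Qed.

Lemma lsum_mul_r {A : Type} (l : list A) (c : R) (f : A -> R) :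
  lsum l f * c = lsum l (fun a => f a * c).
Proof. unfold lsum; induction l as [|a l IH]; simpl; [ring|]. rewrite <- IH; ring. Qed.

Lemma lsum_add {A : Type} (l : list A) (f g : A -> R) :
  lsum l (fun a => f a + g a) = lsum l f + lsum l g.
Proof. unfold lsum; induction l as [|a l IH]; simpl; [ring|]. rewrite IH; ring. Qed.

Lemma lsum_swap {A B : Type} (l1 : list A) (l2 : list B) (f : A -> B -> R) :
  lsum l1 (fun a => lsum l2 (f a)) = lsum l2 (fun b => lsum l1 (fun a => f a b)).
Proof.
  induction l1 as [|a l1 IH].
  - unfold lsum; simpl. induction l2 as [|b l2 IH2]; simpl; [reflexivity|].
    rewrite <- IH2; ring.
  - change (lsum l2 (f a) + lsum l1 (fun a => lsum l2 (f a))
              = lsum l2 (fun b => f a b + lsum l1 (fun a => f a b))).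
    rewrite IH, lsum_add; reflexivity.
Qed.

Lemma lsum_app {A : Type} (l1 l2 : list A) (f : A -> R) :
  lsum (l1 ++ l2) f = lsum l1 f + lsum l2 f.
Proof.
  unfold lsum; rewrite map_app, fold_right_app.
  induction l1 as [|a l1 IH]; simpl; [ring|]; rewrite IH; ring.
Qed.

Lemma lsum_list_prod {A B : Type} (l1 : list A) (l2 : list B) (f : A -> R) (g : B -> R) :
  lsum (list_prod l1 l2) (fun p => f (fst p) * g (snd p)) = lsum l1 f * lsum l2 g.
Proof.
  induction l1 as [|a l1 IH]; [unfold lsum; simpl; ring|].
  simpl list_prod; rewrite lsum_app, IH.
  change (lsum (a :: l1) f) with (f a + lsum l1 f).
  rewrite Rmult_plus_distr_r, (lsum_mul_l l2 (f a)).
  unfold lsum; rewrite map_map; reflexivity.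
Qed.

Lemma infinite_sum_ext (f g : nat -> R) (l : R) :
  (forall k, f k = g k) -> infinite_sum f l -> infinite_sum g l.
Proof.
  intros Hfg Hf eps Heps; destruct (Hf eps Heps) as [N HN]; exists N.
  intros n Hn; rewrite <- (sum_eq f g n) by auto; auto.
Qed.

Lemma infinite_sum_plus (f g : nat -> R) (a b : R) :
  infinite_sum f a -> infinite_sum g b -> infinite_sum (fun k => f k + g k) (a + b).
Proof.
  intros Hf Hg eps Heps.
  destruct (CV_plus _ _ _ _ Hf Hg eps Heps) as [N HN]; exists N.
  intros n Hn; rewrite plus_sum; apply HN; exact Hn.
Qed.

Lemma infinite_sum_scal (f : nat -> R) (a c : R) :
  infinite_sum f a -> infinite_sum (fun k => c * f k) (c * a).
Proof.
  intros Hf eps Heps.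
  assert (Hc : Un_cv (fun _ => c) c).
  { intros e He; exists 0%nat; intros; unfold Rdist; rewrite Rminus_diag, Rabs_R0; exact He. }
  destruct (CV_mult _ _ _ _ Hc Hf eps Heps) as [N HN]; exists N.
  intros n Hn; rewrite (sum_eq _ (fun k => f k * c)) by (intros; ring).
  rewrite <- scal_sum; apply HN; exact Hn.
Qed.

Lemma infinite_sum_lsum {A : Type} (l : list A) (f : A -> nat -> R) (s : A -> R) :
  (forall a, In a l -> infinite_sum (f a) (s a)) ->
  infinite_sum (fun k => lsum l (fun a => f a k)) (lsum l s).
Proof.
  induction l as [|a l IH]; intros Hs.
  - intros eps Heps; exists 0%nat; intros n _.
    unfold lsum, Rdist; simpl; rewrite sum_cte, Rmult_0_l, Rminus_0_r, Rabs_R0; exact Heps.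
  - apply (infinite_sum_plus (f a) (fun k => lsum l (fun a => f a k)));
      [apply Hs; left; reflexivity | apply IH; intros b Hb; apply Hs; right; exact Hb].
Qed.

Lemma infinite_sum_even_support (f : nat -> R) (a : R) :
  (forall i, f (2 * i + 1)%nat = 0) ->
  infinite_sum (fun i => f (2 * i)%nat) a -> infinite_sum f a.
Proof.
  intros Hodd Hf.
  assert (Hpart : forall n, sum_f_R0 f (2 * n) = sum_f_R0 (fun i => f (2 * i)%nat) n
                         /\ sum_f_R0 f (2 * n + 1) = sum_f_R0 (fun i => f (2 * i)%nat) n).
  { induction n as [|n [_ IH]].
    - specialize (Hodd 0%nat); simpl in *; rewrite Hodd; split; ring.
    - assert (Heven : sum_f_R0 f (2 * S n) = sum_f_R0 f (2 * n + 1) + f (2 * S n)%nat)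
        by (replace (2 * S n)%nat with (S (2 * n + 1)) by lia; reflexivity).
      assert (Hnext : sum_f_R0 f (2 * S n + 1) = sum_f_R0 f (2 * S n) + f (2 * S n + 1)%nat)
        by (rewrite Nat.add_1_r; reflexivity).
      rewrite Hnext, Hodd, Heven, IH, tech5; split; ring. }
  intros eps Heps; destruct (Hf eps Heps) as [N HN]; exists (2 * N)%nat.
  intros n Hn; destruct (Nat.Even_or_Odd n) as [[m ->]|[m ->]].
  - rewrite (proj1 (Hpart m)); apply HN; lia.
  - rewrite (proj2 (Hpart m)); apply HN; lia.
Qed.

Lemma infinite_sum_shift (f : nat -> R) (a : R) :
  f 0%nat = 0 -> infinite_sum (fun k => f (S k)) a -> infinite_sum f a.
Proof.
  intros Hf0 Hf.
  assert (Hpart : forall n, sum_f_R0 f (S n) = sum_f_R0 (fun k => f (S k)) n).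
  { induction n as [|n IH]; simpl in *; [rewrite Hf0; ring | rewrite IH; reflexivity]. }
  intros eps Heps; destruct (Hf eps Heps) as [N HN]; exists (S N).
  intros [|n] Hn; [lia|]. rewrite Hpart; apply HN; lia.
Qed.

Lemma negi_pow_add2 (k : nat) :
  re_negi_pow (k + 2) = - re_negi_pow k /\ im_negi_pow (k + 2) = - im_negi_pow k.
Proof.
  unfold re_negi_pow, im_negi_pow.
  rewrite Nat.Div0.add_mod; pose proof (Nat.mod_upper_bound k 4 ltac:(lia)).
  destruct (k mod 4)%nat as [|[|[|[|r]]]]; simpl; split; ring || lia.
Qed.

Lemma negi_pow_parity (i : nat) :
  re_negi_pow (2 * i) = (-1) ^ i /\ re_negi_pow (2 * i + 1) = 0 /\
  im_negi_pow (2 * i) = 0 /\ im_negi_pow (2 * i + 1) = - (-1) ^ i.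
Proof.
  induction i as [|i (IH1 & IH2 & IH3 & IH4)].
  - unfold re_negi_pow, im_negi_pow; simpl; repeat split; ring.
  - replace (2 * S i)%nat with (2 * i + 2)%nat by lia.
    replace (2 * i + 2 + 1)%nat with (2 * i + 1 + 2)%nat by lia.
    destruct (negi_pow_add2 (2 * i)) as [-> ->], (negi_pow_add2 (2 * i + 1)) as [-> ->].
    rewrite IH1, IH2, IH3, IH4; simpl; repeat split; ring.
Qed.

Lemma infinite_sum_cos (z : R) :
  infinite_sum (fun k => re_negi_pow k * z ^ k / INR (fact k)) (cos z).
Proof.
  unfold cos; destruct (exist_cos (Rsqr z)) as [l Hl]; unfold cos_in in Hl.
  apply infinite_sum_even_support.
  - intros i; rewrite (proj1 (proj2 (negi_pow_parity i))); unfold Rdiv; ring.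
  - apply (infinite_sum_ext (fun i => cos_n i * Rsqr z ^ i)); [|exact Hl].
    intros i; rewrite (proj1 (negi_pow_parity i)), pow_mult; unfold cos_n, Rsqr.
    replace (z ^ 2) with (z * z) by ring; unfold Rdiv; ring.
Qed.

Lemma infinite_sum_sin (z : R) :
  infinite_sum (fun k => im_negi_pow k * z ^ k / INR (fact k)) (- sin z).
Proof.
  unfold sin; destruct (exist_sin (Rsqr z)) as [l Hl]; unfold sin_in in Hl.
  apply infinite_sum_shift; [change (im_negi_pow 0) with 0; unfold Rdiv; ring|].
  apply infinite_sum_even_support.
  - intros i; replace (S (2 * i + 1)) with (2 * S i)%nat by lia.
    rewrite (proj1 (proj2 (proj2 (negi_pow_parity (S i))))); unfold Rdiv; ring.
  - replace (- (z * l)) with (- z * l) by ring.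
    apply (infinite_sum_ext (fun i => - z * (sin_n i * Rsqr z ^ i)));
      [|apply infinite_sum_scal; exact Hl].
    intros i; rewrite <- Nat.add_1_r, (proj2 (proj2 (proj2 (negi_pow_parity i)))).
    rewrite pow_add, pow_mult, pow_1; replace (z ^ 2) with (Rsqr z) by (unfold Rsqr; ring).
    unfold sin_n, Rdiv; ring.
Qed.

Section Spectral.

Variables (G : graph) (J : Type) (js : list J).
Variables (w lam : J -> R) (v : J -> vtx G -> R).

Hypothesis eigen :
  forall j x, In j js -> In x (verts G) ->
  lsum (verts G) (fun z => adjR G x z * v j z) = lam j * v j x.
Hypothesis resolution :
  forall x y, In x (verts G) -> In y (verts G) ->
  lsum js (fun j => w j * v j x * v j y) = if vdec G x y then 1 else 0.

Lemma apow_spectral (k : nat) (x y : vtx G) :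
  In x (verts G) -> In y (verts G) ->
  apow G k x y = lsum js (fun j => w j * v j x * v j y * lam j ^ k).
Proof.
  intros Hx Hy; revert x Hx; induction k as [|k IH]; intros x Hx.
  - simpl apow; rewrite <- resolution by assumption.
    apply lsum_ext_in; intros j _; ring.
  - change (apow G (S k) x y) with (lsum (verts G) (fun z => adjR G x z * apow G k z y)).
    rewrite (lsum_ext_in _ _
               (fun z => lsum js (fun j => adjR G x z * v j z * (w j * v j y * lam j ^ k))))
      by (intros z Hz; rewrite IH, lsum_mul_l by exact Hz; apply lsum_ext_in; intros; ring).
    rewrite lsum_swap; apply lsum_ext_in; intros j Hj.
    rewrite <- lsum_mul_r, eigen by assumption; simpl; ring.
Qed.

Lemma H_entry_spectral (t : R) (x y : vtx G) (a b : R) :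
  In x (verts G) -> In y (verts G) ->
  a = lsum js (fun j => w j * v j x * v j y * cos (lam j * t)) ->
  b = - lsum js (fun j => w j * v j x * v j y * sin (lam j * t)) ->
  H_entry G t x y a b.
Proof.
  intros Hx Hy -> ->; split.
  - apply (infinite_sum_ext (fun k => lsum js (fun j =>
        w j * v j x * v j y * (re_negi_pow k * (lam j * t) ^ k / INR (fact k))))).
    + intros k; rewrite apow_spectral, lsum_mul_l by assumption.
      apply lsum_ext_in; intros j _; rewrite Rpow_mult_distr; unfold Rdiv; ring.
    + apply infinite_sum_lsum; intros j _; apply infinite_sum_scal, infinite_sum_cos.
  - rewrite <- (Rmult_1_l (lsum _ _)), Ropp_mult_distr_l, lsum_mul_l.
    apply (infinite_sum_ext (fun k => lsum js (fun j =>
        w j * v j x * v j y * (im_negi_pow k * (lam j * t) ^ k / INR (fact k))))).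
    + intros k; rewrite apow_spectral, lsum_mul_l by assumption.
      apply lsum_ext_in; intros j _; rewrite Rpow_mult_distr; unfold Rdiv; ring.
    + apply infinite_sum_lsum; intros j _.
      rewrite <- Ropp_mult_distr_l, Rmult_1_l, Ropp_mult_distr_r.
      apply infinite_sum_scal, infinite_sum_sin.
Qed.

End Spectral.

Lemma cart_indicator (G1 G2 : graph) (a a' : vtx G1) (b b' : vtx G2) :
  (if vdec (cart G1 G2) (a, b) (a', b') then 1 else 0)
  = (if vdec G1 a a' then 1 else 0) * (if vdec G2 b b' then 1 else 0).
Proof. simpl; destruct (vdec G1 a a'), (vdec G2 b b'); ring. Qed.

Notation P2xP3 := (cart (path_graph 2) (path_graph 3)).

(* [p2_vec mu] and [p3_vec nu] are eigenvectors of P2 and P3 when mu² = 1 and nu³ = 2 nu;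
   [p3_weight nu] is the inverse squared norm of [p3_vec nu]. *)
Definition p2_vec (mu : R) (a : nat) : R := if Nat.eqb a 1 then 1 else mu.
Definition p3_vec (nu : R) (b : nat) : R :=
  match b with 1%nat => 1 | 2%nat => nu | _ => nu ^ 2 - 1 end.
Definition p3_weight (nu : R) : R := / (1 + nu ^ 2 + (nu ^ 2 - 1) ^ 2).

Definition P2xP3_spectrum : list (R * R) := list_prod [1; -1] [sqrt 2; 0; - sqrt 2].

Lemma sqrt2_sqr : sqrt 2 ^ 2 = 2.
Proof. apply pow2_sqrt; lra. Qed.

Lemma p3_weight_values :
  p3_weight (sqrt 2) = / 4 /\ p3_weight 0 = / 2 /\ p3_weight (- sqrt 2) = / 4.
Proof.
  unfold p3_weight; replace ((- sqrt 2) ^ 2) with (sqrt 2 ^ 2) by ring.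
  rewrite sqrt2_sqr; repeat split; f_equal; ring.
Qed.

Lemma p2_resolution (a a' : nat) :
  In a (verts (path_graph 2)) -> In a' (verts (path_graph 2)) ->
  lsum [1; -1] (fun mu => / 2 * p2_vec mu a * p2_vec mu a')
  = if vdec (path_graph 2) a a' then 1 else 0.
Proof.
  simpl; intros [<-|[<-|[]]] [<-|[<-|[]]]; unfold lsum, p2_vec; simpl; field.
Qed.

Lemma p3_resolution (b b' : nat) :
  In b (verts (path_graph 3)) -> In b' (verts (path_graph 3)) ->
  lsum [sqrt 2; 0; - sqrt 2] (fun nu => p3_weight nu * p3_vec nu b * p3_vec nu b')
  = if vdec (path_graph 3) b b' then 1 else 0.
Proof.
  destruct p3_weight_values as (W1 & W0 & W2).
  unfold lsum; simpl map; simpl fold_right; rewrite W1, W0, W2.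
  simpl; intros [<-|[<-|[<-|[]]]] [<-|[<-|[<-|[]]]]; simpl; field [sqrt2_sqr].
Qed.

Definition P2xP3_weight (j : R * R) : R := / 2 * p3_weight (snd j).
Definition P2xP3_vec (j : R * R) (x : nat * nat) : R :=
  p2_vec (fst j) (fst x) * p3_vec (snd j) (snd x).

Lemma P2xP3_resolution (x y : nat * nat) :
  In x (verts P2xP3) -> In y (verts P2xP3) ->
  lsum P2xP3_spectrum (fun j => P2xP3_weight j * P2xP3_vec j x * P2xP3_vec j y)
  = if vdec P2xP3 x y then 1 else 0.
Proof.
  destruct x as [a b], y as [a' b']; intros Hx Hy.
  apply in_prod_iff in Hx as [Ha Hb], Hy as [Ha' Hb'].
  rewrite (cart_indicator (path_graph 2) (path_graph 3)).
  rewrite <- p2_resolution, <- p3_resolution, <- lsum_list_prod by assumption.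
  apply lsum_ext_in; intros j _; unfold P2xP3_weight, P2xP3_vec; simpl; ring.
Qed.

Lemma P2xP3_eigen (mu nu : R) (x : nat * nat) :
  mu ^ 2 = 1 -> nu ^ 3 = 2 * nu -> In x (verts P2xP3) ->
  lsum (verts P2xP3) (fun z => adjR P2xP3 x z * P2xP3_vec (mu, nu) z)
  = (mu + nu) * P2xP3_vec (mu, nu) x.
Proof.
  intros Hmu Hnu Hx; simpl in Hmu, Hnu, Hx.
  repeat destruct Hx as [<-|Hx]; [..|destruct Hx];
    unfold lsum, adjR, P2xP3_vec, p2_vec, p3_vec; simpl; nsatz.
Qed.

Lemma H_entry_P2xP3 (t : R) (x y : nat * nat) (a b : R) :
  In x (verts P2xP3) -> In y (verts P2xP3) ->
  a = lsum P2xP3_spectrum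
        (fun j => P2xP3_weight j * P2xP3_vec j x * P2xP3_vec j y * cos ((fst j + snd j) * t)) ->
  b = - lsum P2xP3_spectrum
        (fun j => P2xP3_weight j * P2xP3_vec j x * P2xP3_vec j y * sin ((fst j + snd j) * t)) ->
  H_entry P2xP3 t x y a b.
Proof.
  apply (H_entry_spectral P2xP3 _ P2xP3_spectrum P2xP3_weight (fun j => fst j + snd j));
    [|exact P2xP3_resolution].
  intros [mu nu] z Hj Hz; apply in_prod_iff in Hj as [Hmu Hnu].
  apply P2xP3_eigen; [| |exact Hz].
  - simpl in Hmu; repeat destruct Hmu as [<-|Hmu]; [..|destruct Hmu]; ring.
  - simpl in Hnu; repeat destruct Hnu as [<-|Hnu]; [..|destruct Hnu]; ring [sqrt2_sqr].
Qed.

Ltac expand_trig t :=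
  unfold lsum, P2xP3_spectrum, P2xP3_weight, P2xP3_vec, p2_vec, p3_vec; simpl;
  destruct p3_weight_values as (-> & -> & ->);
  rewrite !Rmult_plus_distr_r; replace (-1 * t) with (- t) by ring;
  rewrite ?cos_plus, ?sin_plus, ?Rmult_1_l, ?Rmult_0_l,
    ?Ropp_mult_distr_l_reverse, ?cos_neg, ?sin_neg, ?cos_0, ?sin_0;
  field [sqrt2_sqr].

Lemma H_entry_P2xP3_end_to_end (t : R) :
  H_entry P2xP3 t (1, 1)%nat (1, 3)%nat (cos t * (cos (sqrt 2 * t) - 1) / 2) 0.
Proof.
  apply H_entry_P2xP3; [simpl; tauto | simpl; tauto | |]; expand_trig t.
Qed.

Lemma H_entry_P2xP3_rung (t : R) :
  H_entry P2xP3 t (1, 1)%nat (2, 1)%nat 0 (- sin t * (cos (sqrt 2 * t) + 1) / 2).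
Proof.
  apply H_entry_P2xP3; [simpl; tauto | simpl; tauto | |]; expand_trig t.
Qed.

(* Each step multiplies x + y√2 (resp. x + m√8) by the unit 3 + 2√2 (resp. 3 + √8). *)
Lemma pell_sqrt2_negative (n : nat) :
  exists x y : nat, Nat.Odd x /\ Nat.Odd y /\ (x * x + 1 = 2 * y * y)%nat /\ (n <= x)%nat.
Proof.
  induction n as [|n (x & y & [p ->] & [q ->] & Hxy & Hn)].
  - exists 1%nat, 1%nat; repeat split; try lia; exists 0%nat; lia.
  - exists (3 * (2 * p + 1) + 4 * (2 * q + 1))%nat, (2 * (2 * p + 1) + 3 * (2 * q + 1))%nat.
    repeat split; [exists (3 * p + 4 * q + 3)%nat | exists (2 * p + 3 * q + 2)%nat | |]; nia.
Qed.

Lemma pell_sqrt8 (n : nat) :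
  exists x m : nat, Nat.Odd x /\ (x * x = 8 * m * m + 1)%nat /\ (n <= m)%nat.
Proof.
  induction n as [|n (x & m & [p ->] & Hxm & Hn)].
  - exists 3%nat, 1%nat; repeat split; try lia; exists 1%nat; lia.
  - exists (3 * (2 * p + 1) + 8 * m)%nat, (2 * p + 1 + 3 * m)%nat.
    repeat split; [exists (3 * p + 4 * m + 1)%nat | |]; nia.
Qed.

Lemma sub_le_div_of_sqr_eq (a b c : R) :
  0 <= a -> 0 < b -> 0 <= c -> a ^ 2 = b ^ 2 + c -> 0 <= a - b <= c / b.
Proof.
  intros Ha Hb Hc Habc.
  assert (Hab : b <= a) by nra.
  split; [lra|].
  apply Rmult_le_reg_r with b; [exact Hb|].
  unfold Rdiv; rewrite Rmult_assoc, Rinv_l, Rmult_1_r by lra; nra.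
Qed.

Lemma cos_add_INR_mul_PI (z : R) (k : nat) : cos (z + INR k * PI) = (-1) ^ k * cos z.
Proof.
  induction k as [|k IH]; [simpl; rewrite Rmult_0_l, Rplus_0_r; ring|].
  rewrite S_INR, Rmult_plus_distr_r, Rmult_1_l, <- Rplus_assoc, neg_cos, IH; simpl; ring.
Qed.

Lemma cos_add_odd_mul_PI (z : R) (k : nat) : Nat.Odd k -> cos (z + INR k * PI) = - cos z.
Proof. intros [p ->]; rewrite cos_add_INR_mul_PI, Nat.add_1_r, pow_1_odd; ring. Qed.

Lemma half_one_plus_cos_near_one (d : R) :
  0 <= d <= 1 -> Rabs ((1 + cos (d * PI)) / 2 - 1) <= 4 * d.
Proof.
  intros Hd; pose proof PI_RGT_0; pose proof PI_4.
  set (h := d * PI / 2).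
  assert (Hsin : 0 <= sin h <= h).
  { assert (Hh : 0 <= h <= PI) by (unfold h; nra).
    split; [apply sin_ge_0; lra|].
    destruct (Rle_lt_or_eq_dec 0 h (proj1 Hh)) as [Hpos|<-];
      [left; apply sin_lt_x, Hpos | rewrite sin_0; lra]. }
  replace ((1 + cos (d * PI)) / 2 - 1) with (- (sin h * sin h))
    by (replace (d * PI) with (2 * h) by (unfold h; field); rewrite cos_2a_sin; field).
  rewrite Rabs_Ropp, Rabs_pos_eq by nra.
  assert (h <= 2 * d) by (unfold h; nra); nra.
Qed.

Lemma PGST_of_cos_approx (G : graph) (x y : vtx G) :
  (forall n : nat, (0 < n)%nat -> exists t a b d : R,
     H_entry G t x y a b /\ sqrt (a ^ 2 + b ^ 2) = (1 + cos (d * PI)) / 2 /\ 0 <= d <= / INR n) ->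
  PGST G x y.
Proof.
  intros Happrox eps Heps.
  destruct (archimed_cor1 (eps / 4)) as (n & Hn & Hn0); [lra|].
  destruct (Happrox n Hn0) as (t & a & b & d & Ht & Hab & Hd).
  assert (/ INR n <= 1)
    by (rewrite <- Rinv_1; apply Rinv_le_contravar; [lra | apply (le_INR 1); exact Hn0]).
  exists t, a, b; split; [exact Ht|].
  rewrite Hab; eapply Rle_lt_trans; [apply half_one_plus_cos_near_one|]; lra.
Qed.

Lemma P2xP3_PGST_end_to_end : PGST P2xP3 (1, 1)%nat (1, 3)%nat.
Proof.
  apply PGST_of_cos_approx; intros n Hn.
  destruct (pell_sqrt2_negative n) as (x & y & Hx & Hy & Hxy & Hnx).
  set (t := INR y * PI); set (d := INR y * sqrt 2 - INR x).
  exists t, (cos t * (cos (sqrt 2 * t) - 1) / 2), 0, d.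
  split; [apply H_entry_P2xP3_end_to_end|].
  assert (Hcos_t : cos t = -1)
    by (unfold t; rewrite <- (Rplus_0_l (INR y * PI)), cos_add_odd_mul_PI, cos_0 by exact Hy;
        ring).
  assert (Hcos_st : cos (sqrt 2 * t) = - cos (d * PI))
    by (replace (sqrt 2 * t) with (d * PI + INR x * PI) by (unfold t, d; ring);
        apply cos_add_odd_mul_PI, Hx).
  assert (Hpos : 0 < INR x) by (apply lt_0_INR; lia).
  assert (Hd : 0 <= d <= 1 / INR x).
  { apply sub_le_div_of_sqr_eq;
      [pose proof (sqrt_pos 2); pose proof (pos_INR y); nra | exact Hpos | lra |].
    rewrite Rpow_mult_distr, sqrt2_sqr.
    apply (f_equal INR) in Hxy; rewrite plus_INR, !mult_INR in Hxy; simpl in Hxy; lra. }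
  split.
  - rewrite Hcos_t, Hcos_st.
    replace ((-1 * (- cos (d * PI) - 1) / 2) ^ 2 + 0 ^ 2) with (((1 + cos (d * PI)) / 2) ^ 2)
      by field.
    apply sqrt_pow2; pose proof (COS_bound (d * PI)); lra.
  - assert (/ INR x <= / INR n) by (apply Rinv_le_contravar, le_INR; [apply lt_0_INR | ]; lia).
    unfold Rdiv in Hd; lra.
Qed.

Lemma P2xP3_PGST_rung : PGST P2xP3 (1, 1)%nat (2, 1)%nat.
Proof.
  apply PGST_of_cos_approx; intros n Hn.
  destruct (pell_sqrt8 n) as (x & m & [p Hp] & Hxm & Hnm).
  set (t := INR x * PI / 2); set (d := INR x * sqrt 2 / 2 - 2 * INR m).
  exists t, 0, (- sin t * (cos (sqrt 2 * t) + 1) / 2), d.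
  split; [apply H_entry_P2xP3_rung|].
  assert (Hcos_t : cos t = 0).
  { replace t with (PI / 2 + INR p * PI)
      by (unfold t; rewrite Hp, plus_INR, mult_INR; simpl; field).
    rewrite cos_add_INR_mul_PI, cos_PI2; ring. }
  assert (Hsin_t : sin t ^ 2 = 1)
    by (pose proof (sin2_cos2 t) as H; rewrite Hcos_t in H; unfold Rsqr in H; simpl; lra).
  assert (Hcos_st : cos (sqrt 2 * t) = cos (d * PI)).
  { replace (sqrt 2 * t) with (d * PI + INR (2 * m) * PI)
      by (unfold t, d; rewrite mult_INR; simpl; field).
    rewrite cos_add_INR_mul_PI, pow_1_even; ring. }
  assert (Hpos : 0 < INR m) by (apply lt_0_INR; lia).
  assert (Hd : 0 <= d <= / 2 / (2 * INR m)).
  { apply sub_le_div_of_sqr_eq;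
      [pose proof (sqrt_pos 2); pose proof (pos_INR x); nra | lra | lra |].
    replace ((INR x * sqrt 2 / 2) ^ 2) with (INR x ^ 2 * sqrt 2 ^ 2 / 4) by field.
    rewrite sqrt2_sqr.
    apply (f_equal INR) in Hxm; rewrite plus_INR, !mult_INR in Hxm; simpl in Hxm; simpl; lra. }
  split.
  - rewrite Hcos_st.
    replace (0 ^ 2 + (- sin t * (cos (d * PI) + 1) / 2) ^ 2)
      with (sin t ^ 2 * ((1 + cos (d * PI)) / 2) ^ 2) by field.
    rewrite Hsin_t, Rmult_1_l; apply sqrt_pow2; pose proof (COS_bound (d * PI)); lra.
  - assert (/ INR m <= / INR n) by (apply Rinv_le_contravar, le_INR; [apply lt_0_INR | ]; lia).
    assert (/ 2 / (2 * INR m) = / 4 * / INR m) by (field; lra).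
    lra.
Qed.

Theorem mainTheorem6 :
  PGST (cart (path_graph 2) (path_graph 3)) (1%nat, 1%nat) (1%nat, 3%nat) /\
  PGST (cart (path_graph 2) (path_graph 3)) (1%nat, 1%nat) (2%nat, 1%nat) /\
  ((1%nat, 3%nat) <> (2%nat, 1%nat)).
Proof.
  split; [exact P2xP3_PGST_end_to_end|].
  split; [exact P2xP3_PGST_rung | discriminate].
Qed.
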